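(* Let $F_n:\mathcal{Y}\to[-\infty,0]$, $n\in\mathbb{N}$, satisfy the separated subadditivity condition (S). Then for every $k\in\mathbb{N}$, every integer $\ell>\ell_0$ and every $y\in\mathcal{Y}$, $$\limsup_{n\to\infty}\frac{F_{(n-1)\ell+nk}(y)}{n}\ge\alpha(\ell)(k+\ell)\limsup_{n\to\infty}\frac{F_n(y)}{n}.$$
   Context: Discrete time: $\Psi:\mathcal{Y}\to\mathcal{Y}$ measurable. Condition (S): there exist $\ell_0\ge0$ and a non-increasing $\alpha:[\ell_0,\infty)\to[1,\infty)$ with $\lim_{\ell\to\infty}\alpha(\ell)=1$ such that for all $n\ge1$, all $t_1,\dots,t_n\in\mathbb{N}$, all integers $\ell>\ell_0$ and all $y$, $$F_{(n-1)\ell+\sum_{k=1}^nt_k}(y)\le\frac{1}{\alpha(\ell)}\sum_{k=1}^nF_{t_k}\big(\Psi^{(k-1)\ell+\sum_{j=1}^{k-1}t_j}y\big).$$ *)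

From HB Require Import structures.
From mathcomp Require Import all_boot all_order all_algebra.
From mathcomp Require Import all_classical all_reals all_analysis.
Set Implicit Arguments. Unset Strict Implicit. Unset Printing Implicit Defensive.
Import Order.TTheory GRing.Theory Num.Theory numFieldNormedType.Exports.
Local Open Scope classical_set_scope.

Local Open Scope ring_scope.
Local Open Scope ereal_scope.

Definition admissible_alpha (R : realType) (l0 : R) (alpha : R -> R) : Prop :=
  (0 <= l0)%R /\
  (forall x : R, (l0 <= x)%R -> (1 <= alpha x)%R) /\
  (forall x y : R, (l0 <= x)%R -> (x <= y)%R -> (alpha y <= alpha x)%R) /\
  (alpha @ +oo%R --> (1 : R)%R).

(* Separated subadditivity condition (S) for F : nat -> Y -> \bar R, with the
   given l0 and alpha.  The tuple t_1..t_n is encoded as t : nat -> nat, of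
   which t 0, ..., t (n-1) are used (0-indexed). *)
Definition cond_S (R : realType) (Y : Type) (Psi : Y -> Y)
    (F : nat -> Y -> \bar R) (l0 : R) (alpha : R -> R) : Prop :=
  forall (n : nat) (t : nat -> nat) (l : nat) (y : Y),
    (1 <= n)%N -> (l0 < l%:R)%R ->
    F ((n - 1) * l + \sum_(k < n) t k)%N y
    <= ((alpha l%:R)^-1)%:E *
       \sum_(k < n) F (t k) (iter (k * l + \sum_(j < k) t j)%N Psi y).

From HB Require Import structures.
From mathcomp Require Import all_boot all_order all_algebra.
From mathcomp Require Import all_classical all_reals all_analysis.
From mathcomp Require Import ring lra zify.
Import Order.TTheory GRing.Theory Num.Theory.
Local Open Scope ring_scope.
Local Open Scope ereal_scope.

(* Write p = k + l, c = alpha(l), a_m = F_m(y)/m and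
   b_n = F_((n-1)l+nk)(y)/n.
   1. Condition (S) with two blocks, the second one starting after a gap of
      length l, gives c F_m(y) <= F_a(y) whenever a + l <= m (F <= 0).
   2. For m >= 1 and n = m div p we have (n-1)l + nk + l = np <= m, hence
      c F_m(y) <= F_((n-1)l+nk)(y); since m <= p n (1+eps) as soon as
      n eps >= 1 and F_m(y) <= 0, this yields c p (1+eps) a_m <= b_n.
   3. A comparison lemma for limits superior along the unbounded reindexing
      m |-> m div p turns this into c p (1+eps) limsup a <= limsup b.
   4. Letting eps -> 0 (an elementary statement about extended reals)
      gives c p limsup a <= limsup b, which is the theorem. *)

Lemma lee_wnmul2r {R : realType} (x y z : \bar R) :
  x <= 0 -> y <= z -> z * x <= y * x.
Proof.
by move=> x0 yz; rewrite -leeN2 -!muleN; apply: lee_wpmul2r; rewrite ?oppe_ge0.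
Qed.

(* Step 1: condition (S) with a gap of length l between a block of length a
   and a block ending at m, the second block being dropped since F <= 0. *)
Lemma cond_S_gap {R : realType} {Y : Type} {Psi : Y -> Y}
    {F : nat -> Y -> \bar R} {l0 : R} {alpha : R -> R} :
  (forall n y, F n y <= 0) -> cond_S Psi F l0 alpha ->
  forall (a l m : nat) (y : Y), (l0 < l%:R)%R -> (0 < alpha l%:R)%R ->
  (a + l <= m)%N -> (alpha l%:R)%:E * F m y <= F a y.
Proof.
move=> Fle0 HS a l m y Hl alpha0 alm.
have := HS 2%N (fun i => if i == 0%N then a else (m - (a + l))%N) l y isT Hl.
rewrite !big_ord_recr !big_ord0 /= add0e.
have -> : ((2 - 1) * l + (0 + a + (m - (a + l))))%N = m by lia.
move=> HSm; rewrite -lee_pdivlMl //; apply: (le_trans HSm).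
apply: lee_wpmul2l; first by rewrite lee_fin invr_ge0 ltW.
exact: geeDl.
Qed.

(* Step 2, arithmetic part: if n = m div p and n eps >= 1 then m is at most
   p n (1 + eps), because m < (n + 1) p. *)
Lemma divn_ratio_bound {R : realType} (m p : nat) (eps : R) :
  (0 < p)%N -> (1 <= (m %/ p)%:R * eps)%R ->
  (m%:R <= p%:R * (m %/ p)%:R * (1 + eps))%R.
Proof.
move=> p0 neps; set n := (m %/ p)%N.
have mlt : (m%:R + 1 <= (n%:R + 1) * p%:R :> R)%R.
  by rewrite !natr1 -natrM ler_nat ltn_ceil.
have p1 : (1 <= p%:R :> R)%R by rewrite ler1n.
nra.
Qed.

Lemma cond_S_block_estimate {R : realType} {Y : Type} {Psi : Y -> Y}
    {F : nat -> Y -> \bar R} {l0 : R} {alpha : R -> R} :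
  (forall n y, F n y <= 0) -> cond_S Psi F l0 alpha ->
  forall (k l m : nat) (y : Y) (eps : R),
  (l0 < l%:R)%R -> (0 < alpha l%:R)%R -> (0 < l)%N ->
  let n := (m %/ (k + l))%N in (0 < n)%N -> (1 <= n%:R * eps)%R ->
  (alpha l%:R * (k + l)%:R * (1 + eps))%:E * (F m y * (m%:R^-1)%:E)
    <= F ((n - 1) * l + n * k)%N y * (n%:R^-1)%:E.
Proof.
move=> Fle0 HS k l m y eps Hl c0 l1 n n1 neps.
set c := alpha l%:R; set p := (k + l)%N.
have p0 : (0 < p)%N by rewrite /p; lia.
have np : (n * p <= m)%N by apply: leq_divM.
have m1 : (0 < m)%N by apply: leq_trans np; rewrite muln_gt0 n1.
have gap : c%:E * F m y <= F ((n - 1) * l + n * k)%N y.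
  apply: (cond_S_gap Fle0 HS _ _ _ _ Hl c0).
  have -> : ((n - 1) * l + n * k + l = n * p)%N.
    by have := leq_pmull l n1; rewrite /p mulnDr mulnBl mul1n; lia.
  exact: np.
have ratio : (c / n%:R <= c * p%:R * (1 + eps) / m%:R)%R.
  rewrite -!mulrA; apply: ler_wpM2l; first exact: ltW.
  rewrite mulrA ler_pdivlMr ?ltr0n //.
  rewrite mulrC ler_pdivrMr ?ltr0n // mulrAC.
  exact: divn_ratio_bound.
apply: (@le_trans _ _ ((c / n%:R)%:E * F m y)).
  by rewrite muleCA -EFinM muleC; apply: lee_wnmul2r; rewrite // lee_fin.
by rewrite EFinM muleAC; apply: lee_wpmul2r; rewrite // lee_fin invr_ge0.
Qed.

Lemma limn_esup_reindex_le {R : realType} (u v : (\bar R)^nat) (e : R)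
    (f : nat -> nat) (M : nat) :
  (0 < e)%R ->
  (forall N, exists K, forall m, (K <= m)%N -> (N <= f m)%N) ->
  (forall m, (M <= m)%N -> e%:E * u m <= v (f m)) ->
  e%:E * limn_esup u <= limn_esup v.
Proof.
move=> e0 f_unbounded uv.
have infE (w : (\bar R)^nat) : limn_esup w = ereal_inf (range (esups w)).
  by rewrite limn_esup_lim; apply/cvg_lim => //; exact: cvg_esups_inf.
rewrite (infE v); apply: le_ereal_inf_tmp => _ [N _ <-].
have [K fK] := f_unbounded N.
rewrite -lee_pdivlMl //; apply: (@le_trans _ _ (esups u (maxn M K))).
  by rewrite infE; apply: ereal_inf_lbound; exists (maxn M K).
apply: ge_ereal_sup => _ [m /= Mm <-].
rewrite geq_max in Mm; case/andP: Mm => Mm Km.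
rewrite lee_pdivlMl //; apply: le_trans (uv m Mm) _.
by apply: ereal_sup_ubound; exists (f m) => //=; exact: fK.
Qed.

Lemma lee_mul_limit_eps {R : realType} (q : R) (L X : \bar R) :
  (0 < q)%R -> (forall eps : R, (0 < eps)%R -> (q * (1 + eps))%:E * L <= X) ->
  q%:E * L <= X.
Proof.
move=> q0 HX; have q2 : (0 < q * (1 + 1))%R by rewrite mulr_gt0.
case: L HX => [r| |] HX; last 2 first.
- by move: (HX 1%R ltr01); rewrite mulry gtr0_sg // mul1e mulry gtr0_sg // mul1e.
- by rewrite mulrNy gtr0_sg // mul1e leNye.
case: X HX => [x| |] HX; last 2 first.
- exact: leey.
- by have := HX 1%R ltr01; rewrite -EFinM leeNy_eq.
rewrite -EFinM lee_fin; have [r0|r0] := leP 0%R r.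
  have := HX 1%R ltr01; rewrite -EFinM lee_fin; apply: le_trans.
  by rewrite ler_wpM2r // ler_pMr // lerDl.
apply/ler_addgt0Pr => del del0.
have qr : (0 < q * - r)%R by rewrite mulr_gt0 // oppr_gt0.
have := HX (del / (q * - r))%R (divr_gt0 del0 qr).
rewrite -EFinM lee_fin -lerBlDr; apply: le_trans.
rewrite le_eqVlt; apply/orP; left; apply/eqP.
by field; rewrite ltr0_neq0 // gt_eqF.
Qed.

Theorem lemmaD2 (R : realType) (d : measure_display) (Y : measurableType d)
    (Psi : Y -> Y) (F : nat -> Y -> \bar R) (l0 : R) (alpha : R -> R) :
  measurable_fun setT Psi ->
  (forall n y, F n y <= 0) ->
  admissible_alpha l0 alpha ->
  cond_S Psi F l0 alpha ->
  forall (k l : nat) (y : Y), (l0 < l%:R)%R ->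
    limn_esup (fun n : nat => F ((n - 1) * l + n * k)%N y * (n%:R^-1)%:E)
    >= ((alpha l%:R) * (k + l)%:R)%:E
       * limn_esup (fun n : nat => F n y * (n%:R^-1)%:E).
Proof.
move=> _ Fle0 [l00 [alpha_ge1 _]] HS k l y Hl.
have c0 : (0 < alpha l%:R)%R by apply: lt_le_trans (alpha_ge1 _ (ltW Hl)).
have l1 : (0 < l)%N by rewrite -(ltr0n R); apply: le_lt_trans Hl.
have p0 : (0 < k + l)%N by lia.
apply: lee_mul_limit_eps; first by rewrite mulr_gt0 // ltr0n.
move=> eps eps0; set n0 := (Num.truncn eps^-1).+1.
have n0eps : (1 <= n0%:R * eps)%R.
  by rewrite -ler_pdivrMr // mul1r ltW // truncnS_gt.
apply: (limn_esup_reindex_le _ _ _ (fun m => m %/ (k + l))%N (n0 * (k + l))%N).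
- by rewrite !mulr_gt0 ?ltr0n // ltr_pwDr.
- by move=> N; exists (N * (k + l))%N => m Nm; rewrite leq_divRL.
move=> m n0m; have n0n : (n0 <= m %/ (k + l))%N by rewrite leq_divRL.
apply: (cond_S_block_estimate Fle0 HS) => //; first exact: leq_trans n0n.
apply: le_trans n0eps _; apply: ler_wpM2r; [exact: ltW | by rewrite ler_nat].
Qed.
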